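(* Let $(\vec u,\vec B)$ and $(\vec t,\vec C)$ be proper factorization patterns over $A$, and let $(v_n)_n$, $(w_n)_n$ be sequences of words such that $(v_n)_n$ is $(\vec u,\vec B)$-adequate, $(w_n)_n$ is $(\vec t,\vec C)$-adequate, and $v_n\sim_n w_n$ for every $n\ge0$. Then $\vec u=\vec t$ and $\vec B=\vec C$.
   Context: For $B\subseteq A$, $B^{\circledast}$ is the set of words over $B$ in which every symbol of $B$ occurs. A factorization pattern is $(\vec u,\vec B)$ with $\vec u=(u_0,\dots,u_p)\in(A^* )^{p+1}$, $\vec B=(B_1,\dots,B_p)$ nonempty subsets of $A$, $p\ge0$; $L(\vec u,\vec B,n)=u_0(B_1^{\circledast})^nu_1\cdots(B_p^{\circledast})^nu_p$; $(w_n)_n$ is $(\vec u,\vec B)$-adequate if $w_n\in L(\vec u,\vec B,n)$ for all $n$. The pattern is proper if (i) for all $i=0,\dots,p-1$ the last symbol of $u_i$ (if $u_i$ nonempty) is not in $B_{i+1}$, and for all $i=1,\dots,p$ the first symbol of $u_i$ (if nonempty) is not in $B_i$; and (ii) for all $i=1,\dots,p-1$, if $u_i=\varepsilon$ then $B_i\not\subseteq B_{i+1}$ and $B_{i+1}\not\subseteq B_i$. For words $v,w$, $v\sim_n w$ means that $v$ and $w$ have the same subwords (subsequences) of length at most $n$. *)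

From mathcomp Require Import all_boot.
Set Implicit Arguments. Unset Strict Implicit. Unset Printing Implicit Defensive.

Section Patterns.
Variable A : finType.

Definition full_star (B : {set A}) (w : seq A) : bool :=
  all (fun a => a \in B) w && [forall b in B, b \in w].

Definition in_pow (B : {set A}) (n : nat) (w : seq A) : Prop :=
  exists ws : seq (seq A),
    [/\ size ws = n, all (full_star B) ws & w = flatten ws].

(* A factorization pattern is (u, B) with u = [:: u_0; ...; u_p] and
   B = [:: B_1; ...; B_p] (0-based lists: B_i is nth set0 B (i-1)).
   inL B u n w  <->  w \in u_0 (B_1^circledast)^n u_1 ... (B_p^circledast)^n u_p. *)
Fixpoint inL (B : seq {set A}) (u : seq (seq A)) (n : nat) (w : seq A) : Prop :=
  match B, u with
  | [::], [:: u0] => w = u0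
  | b :: B', u0 :: u' =>
      exists x r, [/\ w = u0 ++ x ++ r, in_pow b n x & inL B' u' n r]
  | _, _ => False
  end.

Definition L (u : seq (seq A)) (B : seq {set A}) (n : nat) (w : seq A) : Prop :=
  inL B u n w.

Definition is_pattern (u : seq (seq A)) (B : seq {set A}) : Prop :=
  size u = (size B).+1 /\ forall i, i < size B -> nth set0 B i != set0.

(* proper pattern; indices 0-based on lists, comments use paper's indices *)
Definition proper_pattern (u : seq (seq A)) (B : seq {set A}) : Prop :=
  is_pattern u B /\
  (* (i) last symbol of u_i (i = 0..p-1) is not in B_{i+1} *)
  (forall i, i < size B -> forall (s : seq A) (a : A),
      nth [::] u i = rcons s a -> a \notin nth set0 B i) /\
  (* (i) first symbol of u_i (i = 1..p) is not in B_i *)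
  (forall i, 1 <= i <= size B -> forall (a : A) (s : seq A),
      nth [::] u i = a :: s -> a \notin nth set0 B i.-1) /\
  (* (ii) for i = 1..p-1, u_i empty -> B_i, B_{i+1} incomparable *)
  (forall i, 1 <= i < size B -> nth [::] u i = [::] ->
      ~~ (nth set0 B i.-1 \subset nth set0 B i) /\
      ~~ (nth set0 B i \subset nth set0 B i.-1)).

Definition adequate (u : seq (seq A)) (B : seq {set A}) (v : nat -> seq A) : Prop :=
  forall n, L u B n (v n).

Definition simn (n : nat) (v w : seq A) : Prop :=
  forall s : seq A, size s <= n -> subseq s v = subseq s w.

End Patterns.

From mathcomp Require Import all_boot.
Set Implicit Arguments. Unset Strict Implicit. Unset Printing Implicit Defensive.

(* Read a pattern (u, B) as the expression u_0 B_1^* u_1 ... B_p^* u_p, a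
   sequence of letters and stars.  For n >= M |A|, every word of L(u, B, n)
   contains as a subword the canonical word obtained by replacing each B_i^*
   with (enum B_i)^M; as v_n ~_n w_n, this canonical word is also a subword of
   w_n, which lies in the language of the expression of (t, C).  Hence the two
   expressions have the same downward closure for the subword order.  A proper
   expression is determined by its downward closure: if the first atoms of two
   such expressions differed, the canonical words of one of them, x :: e, would
   fall into the downward closure of its tail e, which the separation of
   consecutive atoms forbids. *)

Section Subwords.
Variable T : eqType.
Implicit Types (s r x y z : seq T).

Lemma subseq_cons_cat c s y r : c \in y -> subseq s r -> subseq (c :: s) (y ++ r).
Proof. by move=> cy sr; apply: (@cat_subseq _ [:: c]); rewrite ?sub1seq. Qed.

Lemma subseq_flatten (P : pred T) s ys :
  all P s -> size s <= size ys -> (forall y, y \in ys -> {subset P <= y}) ->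
  subseq s (flatten ys).
Proof.
elim: s ys => [|c s IHs] ys; first by rewrite sub0seq.
case: ys => [|y ys] /andP[Pc Ps] // size_s Pys.
apply: subseq_cons_cat; first exact: (Pys y (mem_head _ _)).
by apply: IHs => // y' y'ys; apply: Pys; rewrite inE y'ys orbT.
Qed.

Lemma subseq_catP s y r : subseq s (y ++ r) ->
  exists s1 s2, [/\ s = s1 ++ s2, subseq s1 y & subseq s2 r].
Proof.
case/subseqP=> m size_m ->.
have size_my : size (take (size y) m) = size y.
  by rewrite size_takel // size_m size_cat leq_addr.
exists (mask (take (size y) m) y), (mask (drop (size y) m) r).
by rewrite -mask_cat // cat_take_drop !mask_subseq.
Qed.

Lemma eq_cat_cases x r y z : x ++ r = y ++ z ->
  (exists x', z = x' ++ r) \/ (exists y', y = x ++ y' /\ r = y' ++ z).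
Proof.
elim: x y => [|a x IHx] y /=; first by move=> ->; right; exists y.
case: y => [|b y] /=; first by move=> <-; left; exists (a :: x).
by case=> <- /IHx [[x' ->]|[y' [-> ->]]]; [left; exists x' | right; exists y'].
Qed.

End Subwords.

Section Expressions.
Variable A : finType.
Implicit Types (B C : {set A}) (s w y z : seq A) (M n : nat).

Inductive atom := Sym of A | Star of {set A}.

Fixpoint mem_expr (e : seq atom) w : Prop :=
  match e with
  | [::] => w = [::]
  | Sym a :: e' => exists2 r, w = a :: r & mem_expr e' r
  | Star B :: e' => exists y r, [/\ w = y ++ r, all [in B] y & mem_expr e' r]
  end.

Definition star_word M B := flatten (nseq M (enum B)).

Fixpoint canon_word M (e : seq atom) : seq A :=
  match e with
  | [::] => [::]
  | Sym a :: e' => a :: canon_word M e'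
  | Star B :: e' => star_word M B ++ canon_word M e'
  end.

Implicit Types (e : seq atom) (x : atom) (u t : seq (seq A)) (Bs Cs : seq {set A}).

Definition down e s := exists2 w, mem_expr e w & subseq s w.

Definition down_sub e1 e2 := forall s, down e1 s -> down e2 s.

Definition nonempty_atom x := if x is Star B then B != set0 else true.

Definition separated x1 x2 :=
  match x1, x2 with
  | Sym a, Star B | Star B, Sym a => a \notin B
  | Star B, Star C => ~~ (B \subset C) && ~~ (C \subset B)
  | _, _ => true
  end.

(* [separated] is not transitive, so [sorted] only constrains consecutive atoms. *)
Definition proper_expr e := all nonempty_atom e && sorted separated e.

Lemma star_wordS M B : star_word M.+1 B = enum B ++ star_word M B.
Proof. by []. Qed.

Lemma all_star_word M B : all [in B] (star_word M B).
Proof.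
by elim: M => //= M IHM; rewrite all_cat IHM andbT; apply/allP => b; rewrite mem_enum.
Qed.

Lemma size_star_word M B : size (star_word M B) = M * #|B|.
Proof. by elim: M => //= M IHM; rewrite size_cat IHM mulSn cardE. Qed.

Lemma subseq_star_word M B y : all [in B] y -> size y <= M -> subseq y (star_word M B).
Proof.
move=> yB size_y; apply: (subseq_flatten yB); first by rewrite size_nseq.
by move=> _ /nseqP[-> _] b; rewrite mem_enum.
Qed.

Lemma star_word_mono M M' B : M <= M' -> subseq (star_word M B) (star_word M' B).
Proof.
elim: M M' => [|M IHM] [|M'] // leMM'; first exact: sub0seq.
by rewrite !star_wordS; apply: cat_subseq (IHM _ leMM').
Qed.

Lemma enum_cons B : B != set0 -> exists c s, enum B = c :: s.
Proof.
case/set0Pn=> b bB; case E: (enum B) => [|c s]; last by exists c, s.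
by move: bB; rewrite -mem_enum E.
Qed.

Lemma not_all_enum B C : ~~ (B \subset C) -> ~~ all [in C] (enum B).
Proof.
by apply: contra => /allP BC; apply/subsetP => b bB; apply: BC; rewrite mem_enum.
Qed.

Lemma mem_expr_canon M e : mem_expr e (canon_word M e).
Proof.
elim: e => [|[a|B] e IHe] //=; first by exists (canon_word M e).
by exists (star_word M B), (canon_word M e); split; rewrite ?all_star_word.
Qed.

Lemma canon_word_mono M M' e : M <= M' -> subseq (canon_word M e) (canon_word M' e).
Proof.
move=> leMM'; elim: e => [|[a|B] e IHe] //=; first by rewrite eqxx.
exact: cat_subseq (star_word_mono B leMM') IHe.
Qed.

Lemma subseq_canon_word M e w : mem_expr e w -> size w <= M -> subseq w (canon_word M e).
Proof.
elim: e w => [|[a|B] e IHe] w /=; first by move=> -> _.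
  by case=> r -> er size_r; rewrite eqxx IHe // ltnW.
case=> y [r [-> yB er]]; rewrite size_cat => size_yr.
apply: cat_subseq; first by apply: subseq_star_word yB (leq_trans (leq_addr _ _) size_yr).
exact: IHe er (leq_trans (leq_addl _ _) size_yr).
Qed.

Lemma down_canon M e : down e (canon_word M e).
Proof. by exists (canon_word M e); [exact: mem_expr_canon | exact: subseq_refl]. Qed.

Lemma down_subseq e s s' : down e s -> subseq s' s -> down e s'.
Proof. by case=> w ew sw s's; exists w => //; apply: subseq_trans sw. Qed.

Lemma down_sub_canon e1 e2 : (forall M, down e2 (canon_word M e1)) -> down_sub e1 e2.
Proof.
move=> e2canon s [w e1w sw]; apply: (down_subseq (e2canon (size w))).
exact: subseq_trans sw (subseq_canon_word e1w (leqnn _)).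
Qed.

Lemma down_nil s : down [::] s -> s = [::].
Proof. by case=> w /= ->; rewrite subseq0 => /eqP. Qed.

Lemma down_Sym a e s : down (Sym a :: e) s -> down e (behead s).
Proof.
case=> _ [w -> ew] sw; exists w => //; case: s sw => [|c s] /=; first by rewrite sub0seq.
by case: eqP => // _ /cons_subseq.
Qed.

Lemma down_Sym_skip a e c s : down (Sym a :: e) (c :: s) -> c != a -> down e (c :: s).
Proof. by case=> _ [w -> ew] /= sw /negPf ca; exists w; rewrite // ca in sw. Qed.

Lemma down_Star B e s : down (Star B :: e) s ->
  exists y z, [/\ s = y ++ z, all [in B] y & down e z].
Proof.
case=> _ [y [r [-> yB er]]] /subseq_catP [s1 [s2 [-> s1y s2r]]].
exists s1, s2; split => //; last by exists r.
by apply/allP => b /(mem_subseq s1y) /(allP yB).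
Qed.

Lemma down_Star_skip B e y z : down (Star B :: e) (y ++ z) -> ~~ all [in B] y -> down e z.
Proof.
case/down_Star=> y' [z' [eq_yz y'B ez']] nyB.
case: (eq_cat_cases eq_yz) => [[x eq_z']|[x [eq_y' _]]].
  by apply: down_subseq ez' _; rewrite eq_z' suffix_subseq.
by move: y'B; rewrite eq_y' all_cat (negbTE nyB).
Qed.

Lemma proper_exprE x1 x2 e :
  proper_expr [:: x1, x2 & e] =
  [&& nonempty_atom x1, separated x1 x2 & proper_expr (x2 :: e)].
Proof. by rewrite /proper_expr /= -!andbA; do !bool_congr. Qed.

Lemma proper_expr_nonempty x e : proper_expr (x :: e) -> nonempty_atom x.
Proof. by case/andP=> /andP[]. Qed.

Lemma proper_expr_behead x e : proper_expr (x :: e) -> proper_expr e.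
Proof. by case: e => // x2 e; rewrite proper_exprE => /and3P[]. Qed.

Lemma canon_word_neq_nil M x e :
  proper_expr (x :: e) -> 0 < M -> canon_word M (x :: e) != [::].
Proof.
case: x => //= B /proper_expr_nonempty /enum_cons [c [s eB]].
by case: M => // M _; rewrite star_wordS eB.
Qed.

Lemma canon_word_notin_down_behead M x e : proper_expr (x :: e) -> 0 < M ->
  ~ down e (canon_word M (x :: e)).
Proof.
move=> + M_gt0; elim: e x => [|x2 e IHe] x1.
  by move=> pe /down_nil /eqP; rewrite (negPf (canon_word_neq_nil pe M_gt0)).
rewrite proper_exprE => /and3P[x1_ne sep12 /[dup] pe2 /IHe {}IHe].
case: x1 x2 x1_ne sep12 pe2 IHe => [a|B] [b|C] x1_ne sep12 pe2 /= IHe.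
- by move/down_Sym.
- by move/(@down_Star_skip _ _ [:: a]) => down_e; apply/IHe/down_e; rewrite /= andbT.
- have [c [s eB]] := enum_cons x1_ne; case: M M_gt0 IHe => // M _ IHe.
  have cb : c != b by apply: contraNneq sep12 => <-; rewrite -mem_enum eB mem_head.
  rewrite star_wordS eB /= => /down_Sym_skip /(_ cb) down_e.
  by apply/IHe/(down_subseq down_e); rewrite -cat_cons suffix_subseq.
- case: M M_gt0 IHe => // M _ IHe; rewrite star_wordS -catA.
  case/andP: sep12 => nBC _ /down_Star_skip /(_ (not_all_enum nBC)) down_e.
  by apply: IHe; apply: down_subseq down_e (suffix_subseq _ _).
Qed.

Lemma down_sub_cycle x e e' : proper_expr (x :: e) ->
  down_sub (x :: e) e' -> down_sub e' e -> False.
Proof.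
move=> pe sub1 sub2; apply: (canon_word_notin_down_behead pe (ltn0Sn 0)).
exact/sub2/sub1/down_canon.
Qed.

Lemma down_sub_Sym_Star a e1 C e2 : proper_expr (Star C :: e2) ->
  down_sub (Star C :: e2) (Sym a :: e1) -> down_sub (Star C :: e2) e1.
Proof.
move=> /proper_expr_nonempty /enum_cons [c [s eC]] sub21.
apply: down_sub_canon => M; have := down_Sym (sub21 _ (down_canon M.+1 _)).
rewrite /= star_wordS eC /= -catA => /down_subseq; apply.
apply: subseq_trans (suffix_subseq s _); exact: cat_subseq (canon_word_mono _ _).
Qed.

Lemma canon_word_strip_star M B e y z : proper_expr (Star B :: e) ->
  canon_word M.+1 e = y ++ z -> all [in B] y -> subseq (canon_word M e) z.
Proof.
case: e => [|[b|C] e]; first by rewrite sub0seq.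
  rewrite proper_exprE => /and3P[_ /= bB _].
  case: y => [|c y] /= => [<- _|[<- _] /andP[]]; last by rewrite (negPf bB).
  by rewrite /= eqxx canon_word_mono.
rewrite proper_exprE => /and3P[_ /andP[_ nCB] _] /=.
rewrite star_wordS -catA => /eq_cat_cases [[x ->] _|[y' [-> _]]].
  by apply: subseq_trans (suffix_subseq _ _); apply: cat_subseq (canon_word_mono _ _).
by rewrite all_cat (negPf (not_all_enum nCB)).
Qed.

Lemma down_sub_Star_cancel B e1 e2 : proper_expr (Star B :: e1) ->
  down_sub (Star B :: e1) (Star B :: e2) -> down_sub e1 e2.
Proof.
move=> pe1 sub12; apply: down_sub_canon => M.
case/down_Star: (sub12 _ (down_canon M.+1 (Star B :: e1))) => y [z [eq_yz yB e2z]].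
apply: down_subseq e2z _.
case: (eq_cat_cases eq_yz) => [[x ->]|[y' [eq_y eq_canon]]].
  exact: subseq_trans (canon_word_mono _ (leqnSn M)) (suffix_subseq _ _).
by apply: canon_word_strip_star pe1 eq_canon _; move: yB; rewrite eq_y all_cat => /andP[].
Qed.

Lemma down_sub_Star_Star B e1 C e2 : ~~ (B \subset C) ->
  down_sub (Star B :: e1) (Star C :: e2) -> down_sub (Star B :: e1) e2.
Proof.
move=> nBC sub12; apply: down_sub_canon => M.
have := sub12 _ (down_canon M.+1 (Star B :: e1)); rewrite /= star_wordS -catA.
move/down_Star_skip/(_ (not_all_enum nBC))/down_subseq; apply.
exact: cat_subseq (canon_word_mono _ _).
Qed.

Lemma down_sub_Sym_cancel a e1 e2 :
  down_sub (Sym a :: e1) (Sym a :: e2) -> down_sub e1 e2.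
Proof.
by move=> sub12; apply: down_sub_canon => M; apply: (down_Sym (sub12 _ (down_canon M _))).
Qed.

Lemma down_sub_Sym_Sym a b e1 e2 : b != a ->
  down_sub (Sym b :: e2) (Sym a :: e1) -> down_sub (Sym b :: e2) e1.
Proof.
move=> ba sub21; apply: down_sub_canon => M.
exact: down_Sym_skip (sub21 _ (down_canon M _)) ba.
Qed.

Theorem proper_expr_down_inj e1 e2 : proper_expr e1 -> proper_expr e2 ->
  down_sub e1 e2 -> down_sub e2 e1 -> e1 = e2.
Proof.
elim: e1 e2 => [|x1 e1 IHe] [|x2 e2] // pe1 pe2 sub12 sub21.
- by case/eqP: (canon_word_neq_nil pe2 (ltn0Sn 0)); apply/down_nil/sub21/down_canon.
- by case/eqP: (canon_word_neq_nil pe1 (ltn0Sn 0)); apply/down_nil/sub12/down_canon.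
have [pt1 pt2] := (proper_expr_behead pe1, proper_expr_behead pe2).
case: x1 x2 pe1 pe2 sub12 sub21 => [a|B] [b|C] pe1 pe2 sub12 sub21.
- have [eba|nba] := eqVneq b a.
    subst b; congr (_ :: _); apply: IHe => //.
      exact: down_sub_Sym_cancel sub12.
    exact: down_sub_Sym_cancel sub21.
  by case: (down_sub_cycle pe1 sub12 (down_sub_Sym_Sym nba sub21)).
- by case: (down_sub_cycle pe1 sub12 (down_sub_Sym_Star pe2 sub21)).
- by case: (down_sub_cycle pe2 sub21 (down_sub_Sym_Star pe1 sub12)).
- have [eCB|neCB] := eqVneq C B.
    subst C; congr (_ :: _); apply: IHe => //.
      exact: down_sub_Star_cancel pe1 sub12.
    exact: down_sub_Star_cancel pe2 sub21.
  have [sBC|nBC] := boolP (B \subset C); last first.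
    by case: (down_sub_cycle pe2 sub21 (down_sub_Star_Star nBC sub12)).
  have [sCB|nCB] := boolP (C \subset B).
    by case/eqP: neCB; apply/eqP; rewrite eqEsubset sCB sBC.
  by case: (down_sub_cycle pe1 sub12 (down_sub_Star_Star nCB sub21)).
Qed.

Fixpoint pattern_expr u Bs : seq atom :=
  match Bs, u with
  | [::], u0 :: _ => map Sym u0
  | B0 :: Bs', u0 :: u' => map Sym u0 ++ Star B0 :: pattern_expr u' Bs'
  | _, _ => [::]
  end.

Lemma canon_word_cat_Sym M s e : canon_word M (map Sym s ++ e) = s ++ canon_word M e.
Proof. by elim: s => //= a s ->. Qed.

Lemma mem_expr_cat_Sym s e w : mem_expr e w -> mem_expr (map Sym s ++ e) (s ++ w).
Proof. by elim: s => //= a s IHs ew; exists (s ++ w); last exact: IHs. Qed.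

Lemma in_pow_all B n w : in_pow B n w -> all [in B] w.
Proof.
case=> ws [_ wsB ->]; elim: ws wsB => //= w' ws IHws /andP[/andP[w'B _] wsB].
by rewrite all_cat w'B IHws.
Qed.

Lemma mem_pattern_expr u Bs n w :
  inL Bs u n w -> mem_expr (pattern_expr u Bs) w.
Proof.
elim: Bs u w => [|B0 Bs IHBs] [|u0 u] w //=.
  by case: u => // ->; have := @mem_expr_cat_Sym u0 [::] [::] erefl; rewrite !cats0.
case=> x [r [-> xB0 ur]]; apply: mem_expr_cat_Sym => /=.
by exists x, r; split; [| exact: in_pow_all xB0 | exact: IHBs ur].
Qed.

Lemma subseq_canon_pattern u Bs n w M :
  inL Bs u n w -> M * #|A| <= n -> subseq (canon_word M (pattern_expr u Bs)) w.
Proof.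
elim: Bs u w => [|B0 Bs IHBs] [|u0 u] w //=.
  by case: u => // -> _; rewrite -[map _ _]cats0 canon_word_cat_Sym cats0 subseq_refl.
case=> x [r [-> [xs [size_xs xsB0 ->]] ur]] leMn; rewrite canon_word_cat_Sym /=.
apply/cat_subseq/cat_subseq; rewrite ?subseq_refl ?IHBs //.
apply: (subseq_flatten (all_star_word M B0)).
  by rewrite size_star_word size_xs (leq_trans _ leMn) // leq_mul2l max_card orbT.
by move=> x' /(allP xsB0) /andP[_ /forall_inP x'B0] b /x'B0.
Qed.

Lemma proper_expr_cons x e : nonempty_atom x ->
  (forall x2 e', e = x2 :: e' -> separated x x2) -> proper_expr e -> proper_expr (x :: e).
Proof.
by case: e => [|x2 e] x_ne sep; rewrite ?proper_exprE ?(sep x2 e) /proper_expr /= ?x_ne.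
Qed.

Lemma proper_expr_cat_Sym s x e : proper_expr (x :: e) ->
  (forall s' a, s = rcons s' a -> separated (Sym a) x) ->
  proper_expr (map Sym s ++ x :: e).
Proof.
elim/last_ind: s x e => [|s a IHs] x e // pxe sep.
rewrite map_rcons cat_rcons; apply: IHs => [|s' a' _ //].
by rewrite proper_exprE pxe (sep s a).
Qed.

Lemma proper_expr_Sym s : proper_expr (map Sym s).
Proof. by case/lastP: s => // s a; rewrite map_rcons -cats1 proper_expr_cat_Sym. Qed.

Lemma proper_pattern_behead (u0 : seq A) u B0 Bs :
  proper_pattern (u0 :: u) (B0 :: Bs) -> proper_pattern u Bs.
Proof.
case=> [[[size_u] B_ne] [last_u [first_u empty_u]]].
split; [split|split; [|split]] => // [i|i|[|i]|[|i]] //= lt_iB.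
- exact: (B_ne i.+1).
- exact: (last_u i.+1).
- exact: (first_u i.+2).
- exact: (empty_u i.+2).
Qed.

Lemma proper_pattern_expr u Bs : proper_pattern u Bs -> proper_expr (pattern_expr u Bs).
Proof.
elim: Bs u => [|B0 Bs IHBs] [|u0 u] //= => [_|pu]; first exact: proper_expr_Sym.
have pe := IHBs _ (proper_pattern_behead pu); clear IHBs.
case: pu => [[[size_u] B_ne] [last_u [first_u empty_u]]].
apply: proper_expr_cat_Sym => [|s a]; last exact: (last_u 0).
apply: proper_expr_cons pe => [|x2 e]; first exact: (B_ne 0).
have {first_u}first_u1 := first_u 1 isT; have {empty_u}empty_u1 := empty_u 1.
case: u size_u first_u1 empty_u1 {last_u} => [|[|c u1] u] //= size_u first_u1 empty_u1.
- case: Bs size_u empty_u1 {B_ne} => [|B1 Bs] //= [size_u] empty_u1 [<- _].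
  by apply/andP; apply: empty_u1.
- by case: Bs {size_u B_ne empty_u1} => [|B1 Bs] /= [<- _]; apply: (first_u1 c u1).
Qed.

Lemma cat_Sym_Star_inj s1 s2 B1 B2 e1 e2 :
  map Sym s1 ++ Star B1 :: e1 = map Sym s2 ++ Star B2 :: e2 ->
  [/\ s1 = s2, B1 = B2 & e1 = e2].
Proof. by elim: s1 s2 => [|a1 s1 IHs] [|a2 s2] //= [] // -> /IHs [-> -> ->]. Qed.

Lemma map_Sym_neq_cat_Star s1 s2 B e : map Sym s1 <> map Sym s2 ++ Star B :: e.
Proof. by elim: s1 s2 => [|a1 s1 IHs] [|a2 s2] //= [_ /IHs]. Qed.

Lemma pattern_expr_inj u Bs t Cs : size u = (size Bs).+1 -> size t = (size Cs).+1 ->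
  pattern_expr u Bs = pattern_expr t Cs -> u = t /\ Bs = Cs.
Proof.
have Sym_inj : injective Sym by move=> a b [].
elim: Bs u Cs t => [|B0 Bs IHBs] [|u0 u] [|C0 Cs] [|t0 t] //= [size_u] [size_t].
- by case: u t size_u size_t => [|//] [|//] _ _ /(inj_map Sym_inj) ->.
- by case: u size_u => // _ /map_Sym_neq_cat_Star.
- by case: t size_t => // _ /esym /map_Sym_neq_cat_Star.
- by case/cat_Sym_Star_inj=> -> -> /(IHBs _ _ _ size_u size_t) [-> ->].
Qed.

Lemma adequate_down_sub u Bs t Cs (v w : nat -> seq A) :
  adequate u Bs v -> adequate t Cs w -> (forall n, simn n (v n) (w n)) ->
  down_sub (pattern_expr u Bs) (pattern_expr t Cs).
Proof.
move=> adv adw sim; apply: down_sub_canon => M.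
pose n := size (canon_word M (pattern_expr u Bs)) + M * #|A|.
exists (w n); first exact: mem_pattern_expr (adw n).
rewrite -(sim n _ (leq_addr _ _)).
exact: subseq_canon_pattern (adv n) (leq_addl _ _).
Qed.

End Expressions.

Theorem lemma3p2 (A : finType) (u t : seq (seq A)) (B C : seq {set A})
  (v w : nat -> seq A) :
  proper_pattern u B -> proper_pattern t C ->
  adequate u B v -> adequate t C w ->
  (forall n, simn n (v n) (w n)) ->
  u = t /\ B = C.
Proof.
move=> pu pt adv adw sim.
apply: pattern_expr_inj; [by case: pu => [[]] | by case: pt => [[]] |].
apply: proper_expr_down_inj.
- exact: proper_pattern_expr pu.
- exact: proper_pattern_expr pt.
- exact: adequate_down_sub adv adw sim.
- exact: adequate_down_sub adw adv (fun n s le_sn => esym (sim n s le_sn)).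
Qed.
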